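(* Let $f_0(i)=i$ for all $i\ge1$. Then for $1\le k\le n$, \[c_1(n,k)=\binom{n+k-1}{2k-1},\] and for every $m\ge1$, \[c_m(n,k)=\sum_{i=k}^n(m-1)^{i-k}\binom{i-1}{k-1}\binom{n+i-1}{2i-1}.\]
   Context: For $m\ge 1$, $f_m$ is the invert transform of $f_{m-1}$, i.e. $f_m(n)=f_{m-1}(n)+\sum_{i=1}^{n-1}f_{m-1}(i)f_m(n-i)$ for $n\ge1$. For $m\ge1$ the numbers $c_m(n,k)$, $0\le k\le n$, are defined by $c_m(0,0)=1$, $c_m(n,0)=0$ for $n\ge1$, and $c_m(n,k)=\sum_{i=1}^{n-k+1}f_{m-1}(i)\,c_m(n-i,k-1)$ for $1\le k\le n$. The convention $0^0=1$ is used. *)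

From mathcomp Require Import all_boot.
Set Implicit Arguments. Unset Strict Implicit. Unset Printing Implicit Defensive.

(* [inv_aux g n j] is the invert transform of [g] evaluated at [j], valid for
   [j <= n]:  a(j) = g(j) + \sum_{i=1}^{j-1} g(i) a(j-i)  (j >= 1). *)
Fixpoint inv_aux (g : nat -> nat) (n : nat) : nat -> nat :=
  match n with
  | 0 => fun _ => 0
  | n'.+1 =>
      let a := inv_aux g n' in
      fun j => if j <= n' then a j
               else g j + \sum_(1 <= i < j) g i * a (j - i)
  end.

Definition invert (g : nat -> nat) (n : nat) : nat := inv_aux g n n.

Definition fseq (f0 : nat -> nat) (m : nat) : nat -> nat := iter m invert f0.

Fixpoint cc (g : nat -> nat) (k : nat) (n : nat) : nat :=
  match k with
  | 0 => (n == 0)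
  | k'.+1 => \sum_(1 <= i < (n - k').+1) g i * cc g k' (n - i)
  end.

Definition cm (f0 : nat -> nat) (m n k : nat) : nat := cc (fseq f0 m.-1) k n.

From mathcomp Require Import all_boot zify.
From Stdlib Require Import FunctionalExtensionality.

(** Work with ordinary generating functions, i.e. in the convolution semiring
   of sequences [nat -> nat].  The numbers [c_m(., k)] are the coefficients of
   [F^k], where [F] is the series of [f_{m-1}] without constant term, and the
   invert transform sends [F] to [F / (1 - F)].  Hence, with [G] the series of
   [f_0], the series of [f_a] is [G / (1 - a G)] and
   [(G / (1 - a G))^k = \sum_i a^(i-k) 'C(i-1, k-1) G^i], which is the second
   formula.  For [f_0(i) = i] we have [G = x / (1 - x)^2], so
   [G^k = x^k / (1 - x)^(2k)] has coefficients ['C(n+k-1, 2k-1)].  Quotients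
   are avoided: a series [X] is identified through the equation
   [X = b + u X], which has a unique solution when [u] has no constant term. *)

Definition conv (a b : nat -> nat) : nat -> nat :=
  fun n => \sum_(i < n.+1) a i * b (n - i).
Definition addf (a b : nat -> nat) : nat -> nat := fun n => a n + b n.
Definition scalef (s : nat) (a : nat -> nat) : nat -> nat := fun n => s * a n.
Definition delta : nat -> nat := fun n => n == 0.
Definition drop0 (g : nat -> nat) : nat -> nat := fun n => if n is 0 then 0 else g n.
Definition cpow (u : nat -> nat) (k : nat) : nat -> nat := iter k (conv u) delta.

Lemma sum_triangle (F : nat -> nat -> nat) n :
  \sum_(i < n.+1) \sum_(j < (n - i).+1) F i j =
  \sum_(s < n.+1) \sum_(i < s.+1) F i (s - i).
Proof.
elim: n => [|n IHn]; first by rewrite !big_ord_recl !big_ord0.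
rewrite [RHS]big_ord_recr /= -IHn.
under eq_bigr => i _ do rewrite big_ord_recr.
rewrite big_split /= big_ord_recr /= subnn big_ord0 addn0; congr (_ + _).
by apply: eq_bigr => i _; rewrite subSn // -ltnS.
Qed.

Lemma convC a b : conv a b = conv b a.
Proof.
apply: functional_extensionality => n; rewrite /conv (reindex_inj rev_ord_inj).
by apply: eq_bigr => i _; rewrite /= subSS subKn 1?mulnC // -ltnS.
Qed.

Lemma convA a b c : conv a (conv b c) = conv (conv a b) c.
Proof.
apply: functional_extensionality => n; rewrite /conv.
under eq_bigr => i _ do rewrite big_distrr.
rewrite (sum_triangle (fun i j => a i * (b j * c (n - i - j)))).
apply: eq_bigr => s _; rewrite big_distrl; apply: eq_bigr => i _ /=.
have lt_is := ltn_ord i; have lt_sn := ltn_ord s.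
by rewrite mulnA; congr (_ * c _); lia.
Qed.

Lemma convDr a b c : conv a (addf b c) = addf (conv a b) (conv a c).
Proof.
apply: functional_extensionality => n; rewrite /conv /addf -big_split.
by apply: eq_bigr => i _; rewrite mulnDr.
Qed.

Lemma convDl a b c : conv (addf a b) c = addf (conv a c) (conv b c).
Proof. by rewrite convC convDr !(convC c). Qed.

Lemma convZl s a b : conv (scalef s a) b = scalef s (conv a b).
Proof.
apply: functional_extensionality => n; rewrite /conv /scalef big_distrr /=.
by apply: eq_bigr => i _; rewrite mulnA.
Qed.

Lemma convZr s a b : conv a (scalef s b) = scalef s (conv a b).
Proof. by rewrite convC convZl convC. Qed.

Lemma conv_delta u : conv u delta = u.
Proof.
apply: functional_extensionality => n.
rewrite /conv /delta big_ord_recr /= subnn muln1 big1 // => i _.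
by rewrite subn_eq0 leqNgt ltn_ord muln0.
Qed.

Lemma conv_fixpoint_uniq u b X Y : u 0 = 0 ->
  X = addf b (conv u X) -> Y = addf b (conv u Y) -> X = Y.
Proof.
move=> u0 eqX eqY; apply: functional_extensionality => n.
elim/ltn_ind: n => n IHn; rewrite eqX eqY /addf /conv; congr (_ + _).
apply: eq_bigr => -[[|i] lt_in] _ /=; first by rewrite u0.
by rewrite IHn //; lia.
Qed.

Lemma inv_aux_stable g n j : j <= n -> inv_aux g n j = invert g j.
Proof.
elim: n => [|n IHn] le_jn; first by move: le_jn; rewrite leqn0 => /eqP->.
rewrite /=; case: ifP => [le_jn'|/negbT]; first exact: IHn.
rewrite -ltnNge => lt_nj; have ->: j = n.+1 by apply/eqP; rewrite eqn_leq le_jn.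
by rewrite /invert /= ltnn.
Qed.

Lemma drop0_invert g :
  drop0 (invert g) = addf (drop0 g) (conv (drop0 g) (drop0 (invert g))).
Proof.
apply: functional_extensionality => -[|n]; first by rewrite /addf /conv big_ord1.
rewrite /addf /conv /= /invert /= ltnn; congr (_ + _).
rewrite big_ord_recr /= subnn muln0 addn0 big_ord_recl /= add0n.
rewrite big_add1 big_mkord; apply: eq_bigr => i _.
by rewrite subSS inv_aux_stable ?leq_subr //; case: (n - i).
Qed.

Lemma cc_small g k n : n < k -> cc g k n = 0.
Proof. by case: k => // k lt_nk; rewrite /= big_geq //; lia. Qed.

Lemma cc_cpow g k : cc g k = cpow (drop0 g) k.
Proof.
elim: k => [|k IHk]; first exact: functional_extensionality.
rewrite /cpow iterS -/(cpow _ k) -IHk.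
apply: functional_extensionality => n; rewrite /conv /=.
rewrite -(big_mkord xpredT (fun i => drop0 g i * cc g k (n - i))).
rewrite [RHS]big_ltn //= add0n [RHS](@big_cat_nat _ _ _ (n - k).+1) //=; last first.
  by rewrite ltnS leq_subr.
rewrite [X in _ = _ + X]big_nat_cond [X in _ = _ + X]big1 => [|i /andP [/andP [lt_ki lt_in] _]].
  by rewrite addn0; apply: eq_big_nat => -[].
by rewrite cc_small ?muln0 //; lia.
Qed.

Definition shift (w : nat -> nat) : nat -> nat := fun i => if i is i'.+1 then w i' else 0.
(* The series [\sum_i w i * u^i]; cutting the sum at [i <= n] is harmless
   since [u^i] vanishes below degree [i] when [u 0 = 0] (see [wsum_widen]). *)
Definition wsum (w u : nat -> nat) : nat -> nat :=
  fun n => \sum_(i < n.+1) w i * cpow u i n.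

(* The coefficient of [u^i] in [(u / (1 - a u))^k]. *)
Definition weight (a k i : nat) : nat :=
  match k, i with
  | 0, _ => i == 0
  | _.+1, 0 => 0
  | k'.+1, i'.+1 => a ^ (i' - k') * 'C(i', k')
  end.

Lemma weightS a k :
  weight a k.+1 = addf (shift (weight a k)) (scalef a (shift (weight a k.+1))).
Proof.
apply: functional_extensionality => -[|i]; rewrite /addf /scalef /=.
  by rewrite muln0.
case: k => [|k] /=.
  by case: i => [|i] /=; rewrite ?subn0 ?bin0 ?muln0 ?muln1 ?expnS.
case: i => [|i] /=; first by rewrite muln0 bin_small.
rewrite binS mulnDr addnC; congr (_ + _).
case: (leqP i k) => [le_ik|lt_ki]; first by rewrite !bin_small ?muln0 //; lia.
by rewrite mulnA -expnS; congr (_ ^ _ * _); lia.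
Qed.

Lemma weight_small a k i : i < k -> weight a k i = 0.
Proof. by case: k i => [|k] [|i] //= lt_ik; rewrite bin_small ?muln0. Qed.

Lemma weightE a k i : 0 < k -> 0 < i -> weight a k i = a ^ (i - k) * 'C(i - 1, k - 1).
Proof. by case: k i => [|k] [|i] //= _ _; rewrite subSS !subn1. Qed.

Section WeightedPowers.

Variable u : nat -> nat.
Hypothesis u0 : u 0 = 0.

Lemma cpow_small k n : n < k -> cpow u k n = 0.
Proof.
elim: k n => // k IHk n lt_nk; rewrite /cpow iterS -/(cpow u k) /conv.
rewrite big1 // => -[[|i] lt_in] _ /=; first by rewrite u0.
by rewrite IHk ?muln0 //; lia.
Qed.

Lemma wsum_widen w n N : n < N -> wsum w u n = \sum_(i < N) w i * cpow u i n.
Proof.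
move=> lt_nN; rewrite /wsum (big_ord_widen _ (fun i => w i * cpow u i n) lt_nN).
by rewrite big_mkcond; apply: eq_bigr => i _; case: ltnP => // ?; rewrite cpow_small ?muln0.
Qed.

Lemma wsumD w1 w2 : wsum (addf w1 w2) u = addf (wsum w1 u) (wsum w2 u).
Proof.
apply: functional_extensionality => n; rewrite /wsum /addf -big_split.
by apply: eq_bigr => i _; rewrite mulnDl.
Qed.

Lemma wsumZ a w : wsum (scalef a w) u = scalef a (wsum w u).
Proof.
apply: functional_extensionality => n; rewrite /wsum /scalef big_distrr /=.
by apply: eq_bigr => i _; rewrite mulnA.
Qed.

Lemma wsum_delta : wsum delta u = delta.
Proof.
apply: functional_extensionality => n; rewrite /wsum big_ord_recl /= mul1n.
by rewrite big1 ?addn0 // => i _; rewrite /delta mul0n.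
Qed.

Lemma conv_wsum w : conv u (wsum w u) = wsum (shift w) u.
Proof.
apply: functional_extensionality => n; rewrite {1}/conv.
under eq_bigr => t _ do rewrite (@wsum_widen w (n - t) n.+1 (leq_subr t n)) big_distrr.
rewrite exchange_big (wsum_widen _ _ _ (leqnSn n.+1)) big_ord_recl mul0n add0n.
apply: eq_bigr => i _ /=; rewrite add0n /conv big_distrr /=.
by apply: eq_bigr => t _; rewrite mulnCA.
Qed.

Lemma wsum_weightS a k :
  wsum (weight a k.+1) u =
  addf (conv u (wsum (weight a k) u)) (scalef a (conv u (wsum (weight a k.+1) u))).
Proof. by rewrite {1}weightS wsumD wsumZ !conv_wsum. Qed.

(* [geom a] is the series [u / (1 - a u)]. *)
Local Notation geom a := (wsum (weight a 1) u).

Lemma geom_eq a : geom a = addf u (scalef a (conv u (geom a))).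
Proof. by rewrite {1}wsum_weightS wsum_delta conv_delta. Qed.

Lemma geom0 a : geom a 0 = 0.
Proof. by rewrite /wsum big_ord1. Qed.

Lemma cpow_geom a k : cpow (geom a) k = wsum (weight a k) u.
Proof.
elim: k => [|k IHk]; first by rewrite wsum_delta.
apply: (@conv_fixpoint_uniq (scalef a u) (conv u (wsum (weight a k) u))).
- by rewrite /scalef u0 muln0.
- by rewrite /cpow iterS -/(cpow _ k) IHk {1}geom_eq convDl !convZl convA.
- by rewrite convZl {1}wsum_weightS.
Qed.

Lemma geomS a : geom a.+1 = addf (geom a) (conv (geom a) (geom a.+1)).
Proof.
set G := geom a; set H := geom a.+1.
(* Both sides solve [X = u + (a + 1) u X]. *)
have eqGH : conv G H = addf (conv u G) (scalef a.+1 (conv (conv u G) H)).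
  by rewrite {1}/H geom_eq convDr convZr convA (convC G u).
apply: (@conv_fixpoint_uniq (scalef a.+1 u) u); first by rewrite /scalef u0 muln0.
  by rewrite convZl -geom_eq.
rewrite convZl convDr convA eqGH.
apply: functional_extensionality => n.
by rewrite /addf /scalef {1}/G geom_eq /addf /scalef -/G; lia.
Qed.

End WeightedPowers.

Lemma drop0_fseq f0 m : drop0 (fseq f0 m) = wsum (weight m 1) (drop0 f0).
Proof.
have u0 : drop0 f0 0 = 0 by [].
elim: m => [|m IHm].
  rewrite (geom_eq _ u0 0); apply: functional_extensionality => n.
  by rewrite /addf /scalef mul0n addn0.
set G := wsum (weight m 1) (drop0 f0).
apply: (@conv_fixpoint_uniq G G).
- exact: geom0.
- by rewrite /fseq iterS -/(fseq f0 m) {1}drop0_invert IHm.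
- exact: geomS.
Qed.

Lemma cm_expand f0 m n k : cm f0 m.+1 n k = \sum_(i < n.+1) weight m k i * cm f0 1 n i.
Proof.
rewrite /cm cc_cpow drop0_fseq cpow_geom //.
by apply: eq_bigr => i _; rewrite cc_cpow.
Qed.

Lemma hockey_stick r q n : r <= q ->
  \sum_(t < n.+1) 'C(n - t + r, q) = 'C((n + r).+1, q.+1).
Proof.
move=> le_rq; elim: n => [|n IHn].
  by rewrite big_ord1 binS (bin_small (_ : r < q.+1)).
rewrite big_ord_recl /=; under eq_bigr => i _ do rewrite subSS.
by rewrite IHn subn0 !addSn binS addnC.
Qed.

Lemma hockey_stick2 r q n : r <= q ->
  \sum_(t < n.+1) t * 'C(n - t + r, q) = 'C((n + r).+1, q.+2).
Proof.
move=> le_rq; elim: n => [|n IHn]; first by rewrite big_ord1 mul0n bin_small // !ltnS.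
rewrite big_ord_recl /= mul0n add0n.
under eq_bigr => i _ do rewrite subSS mulSn addnC.
by rewrite big_split /= IHn hockey_stick.
Qed.

Lemma cpow_idS k n : cpow id k.+1 n = 'C(n + k, k.*2.+1).
Proof.
elim: k n => [|k IHk] n; first by rewrite /cpow /= conv_delta addn0 bin1.
rewrite /cpow iterS -/(cpow id k.+1) /conv.
under eq_bigr => t _ do rewrite IHk.
rewrite hockey_stick2 ?doubleS; first by congr 'C(_, _); lia.
by rewrite -addnn; lia.
Qed.

Theorem corollary26 (f0 : nat -> nat) (hf0 : forall i, 1 <= i -> f0 i = i) :
  (forall n k, 1 <= k <= n -> cm f0 1 n k = 'C(n + k - 1, 2 * k - 1)) /\
  (forall m n k, 1 <= m -> 1 <= k <= n ->
     cm f0 m n k =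
     \sum_(k <= i < n.+1) (m - 1) ^ (i - k) * 'C(i - 1, k - 1) * 'C(n + i - 1, 2 * i - 1)).
Proof.
have drop0_f0 : drop0 f0 = id.
  by apply: functional_extensionality => -[|i] //=; rewrite hf0.
have cm1 n k : 0 < k -> cm f0 1 n k = 'C(n + k - 1, 2 * k - 1).
  by case: k => // k _; rewrite /cm cc_cpow drop0_f0 cpow_idS; congr 'C(_, _); lia.
split=> [n k /andP [k_gt0 _] | [//|m] n k _ /andP [k_gt0 le_kn]]; first exact: cm1.
rewrite cm_expand -(big_mkord xpredT (fun i => weight m k i * cm f0 1 n i)).
rewrite (@big_cat_nat _ _ _ k) //=; last exact: leqW.
rewrite big_nat big1 ?add0n => [|i /andP [_ lt_ik]]; last by rewrite weight_small.
apply: eq_big_nat => i /andP [le_ki _].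
by rewrite weightE ?cm1 ?subn1 ?mulnA // (leq_trans k_gt0).
Qed.
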